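(* Let $\Pi$ be the set of graphs $G$ satisfying $\sum_{H:|V(H)|=4} w_H\cdot p(H,G)\le \frac{5}{16}$, where $w_{K_4}=1$, $w_{\bar{K_4}}=\frac12$, $w_{D_4}=\frac{5}{12}$, $w_{\bar{D_4}}=\frac{5}{12}$, $w_{P_3}=\frac13$, $w_{\bar{P_3}}=\frac16$, $w_{C_4}=\frac12$, $w_{\bar{C_4}}=\frac13$, $w_{K_{1,3}}=\frac14$, $w_{\bar{K_{1,3}}}=\frac14$, $w_{P_4}=\frac14$. Then for every $n\ge1$, every $n$-vertex graph $G\in\Pi$ is $\delta$-quasirandom with $\delta=O(n^{-1/24})$ (the implied constant being absolute).
   Context: $K_4$ is the complete graph on 4 vertices, $D_4$ is $K_4$ minus an edge, $P_3$ is the 4-vertex graph consisting of a path on 3 vertices plus an isolated vertex, $C_4$ the 4-cycle, $P_4$ the path on 4 vertices, $K_{1,3}$ the star on 4 vertices, and $\bar H$ the complement of $H$. $p(H,G)$ is the fraction of induced subgraphs of $G$ on $|V(H)|$ vertices isomorphic to $H$. An $n$-vertex graph $G$ is $\delta$-quasirandom (with density $1/2$) if for every pair of disjoint sets $U,V\subseteq V(G)$ with $|U|,|V|\ge\delta n$, the number of edges between $U$ and $V$ satisfies $e(U,V)\in[(\frac12-\delta)|U||V|,(\frac12+\delta)|U||V|]$. *)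

From HB Require Import structures.
From Stdlib Require Import Reals.
From mathcomp Require Import all_boot all_order all_algebra.
From mathcomp Require Import Rstruct.
Set Implicit Arguments. Unset Strict Implicit. Unset Printing Implicit Defensive.
Import Order.TTheory GRing.Theory Num.Theory.
Local Open Scope ring_scope.

Definition simple_graph (T : finType) (e : rel T) : Prop :=
  symmetric e /\ irreflexive e.

Definition rel_of_edges (E : seq (nat * nat)) : rel 'I_4 :=
  fun i j => ((nat_of_ord i, nat_of_ord j) \in E) || ((nat_of_ord j, nat_of_ord i) \in E).

Definition compl_graph (H : rel 'I_4) : rel 'I_4 := fun i j => (i != j) && ~~ H i j.

Definition K4  : rel 'I_4 := rel_of_edges [:: (0,1); (0,2); (0,3); (1,2); (1,3); (2,3)]%N.
Definition D4  : rel 'I_4 := rel_of_edges [:: (0,1); (0,2); (0,3); (1,2); (1,3)]%N.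
(* P3 = path on 3 vertices plus an isolated vertex *)
Definition P3  : rel 'I_4 := rel_of_edges [:: (0,1); (1,2)]%N.
Definition C4  : rel 'I_4 := rel_of_edges [:: (0,1); (1,2); (2,3); (3,0)]%N.
Definition P4  : rel 'I_4 := rel_of_edges [:: (0,1); (1,2); (2,3)]%N.
Definition K13 : rel 'I_4 := rel_of_edges [:: (0,1); (0,2); (0,3)]%N.

Definition induced_copy (T : finType) (e : rel T) (H : rel 'I_4) (S : {set T}) : bool :=
  [exists f : {ffun 'I_4 -> T},
     [&& injectiveb f, f @: setT == S &
         [forall i, forall j, e (f i) (f j) == H i j]]].

Definition p_ind (T : finType) (e : rel T) (H : rel 'I_4) : R :=
  (#|[set S : {set T} | (#|S| == 4)%N && induced_copy e H S]|%:R)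
  / ('C(#|T|, 4)%:R).

Definition weights : seq (rel 'I_4 * R) :=
  [:: (K4, 1); (compl_graph K4, 1/2);
      (D4, 5/12); (compl_graph D4, 5/12);
      (P3, 1/3); (compl_graph P3, 1/6);
      (C4, 1/2); (compl_graph C4, 1/3);
      (K13, 1/4); (compl_graph K13, 1/4);
      (P4, 1/4)].

Definition weighted_density (T : finType) (e : rel T) : R :=
  \sum_(hw <- weights) hw.2 * p_ind e hw.1.

Definition in_Pi (T : finType) (e : rel T) : Prop :=
  weighted_density e <= 5/16.

(* number of edges between U and V (ordered pairs (u,v), u in U, v in V) *)
Definition e_between (T : finType) (e : rel T) (U V : {set T}) : nat :=
  #|[set p : T * T | [&& p.1 \in U, p.2 \in V & e p.1 p.2]]|.

Definition quasirandom (T : finType) (e : rel T) (delta : R) : Prop :=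
  forall U V : {set T}, [disjoint U & V] ->
    delta * #|T|%:R <= #|U|%:R -> delta * #|T|%:R <= #|V|%:R ->
    (1/2 - delta) * (#|U| * #|V|)%:R <= (e_between e U V)%:R
    <= (1/2 + delta) * (#|U| * #|V|)%:R.

From HB Require Import structures.
From Stdlib Require Import Reals.
From mathcomp Require Import all_boot all_order all_algebra.
From mathcomp Require Import Rstruct.
From mathcomp Require Import ring lra zify.
Import Order.TTheory GRing.Theory Num.Theory.
Local Open Scope ring_scope.
Set Implicit Arguments. Unset Strict Implicit. Unset Printing Implicit Defensive.

(* Let Y be the signed adjacency matrix of G (+1 on edges, -1 on non-edges, 0 on
   the diagonal) and describe a labelled 4-vertex graph by its edge signs y_ij.
   The weights w_H are exactly the averages over the 24 labellings of H of
     f(y) = 5/16 + 1/4 y01 y02 + 1/8 y01 y23 + 1/4 y01 y12 y23 + 1/16 y01 y12 y23 y30.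
   Summing f over all maps {0,1,2,3} -> V(G) thus gives at most 5/16 n^4 + O(n^3)
   when G is in Pi (non-injective maps contribute O(n^3)), while expanding the sum
   monomial by monomial gives 5/16 n^4 + (nonnegative terms) + 1/16 tr(Y^4).
   Hence tr(Y^4) <= 66 n^3.  Two Cauchy-Schwarz steps give
   (sum_{U x V} Y)^4 <= |U|^2 |V|^2 tr(Y^4), so e(U, V) = |U||V|/2 up to
   delta |U||V| as soon as delta^8 n is a large enough constant, which holds for
   delta = 2 n^(-1/24). *)

Lemma sqr_sum_le_card (F : realFieldType) (I : finType) (A : {pred I}) (f : I -> F) :
  (\sum_(i in A) f i) ^+ 2 <= #|A|%:R * \sum_(i in A) f i ^+ 2.
Proof.
set S := \sum_(i in A) f i; set S2 := \sum_(i in A) f i ^+ 2; set N : F := #|A|%:R.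
have dev_ge0 : 0 <= \sum_(i in A) (N * f i - S) ^+ 2 by apply: sumr_ge0 => i _; apply: sqr_ge0.
have devE : \sum_(i in A) (N * f i - S) ^+ 2 = N * (N * S2 - S ^+ 2).
  transitivity (\sum_(i in A) (N ^+ 2 * f i ^+ 2 - (2 * N * S) * f i + S ^+ 2)).
    by apply: eq_bigr => i _; ring.
  rewrite !big_split /= sumrN -!mulr_sumr sumr_const -/S -/S2 -/N -mulr_natl; ring.
have [N0 | Npos] := eqVneq N 0.
  have A0 : #|A| = 0%N by apply/eqP; rewrite -(eqr_nat F) -/N N0.
  by rewrite /S big_pred0 ?expr0n ?N0 ?mul0r // => i; exact: card0_eq A0 i.
rewrite devE in dev_ge0; have N_gt0 : 0 < N by rewrite lt0r Npos ler0n.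
by rewrite -subr_ge0 -(pmulr_rge0 _ N_gt0).
Qed.

Lemma psumr_in_le (F : numDomainType) (I : finType) (A : {pred I}) (f : I -> F) :
  (forall i, 0 <= f i) -> \sum_(i in A) f i <= \sum_i f i.
Proof.
move=> f_ge0; rewrite [leRHS](bigID (mem A)) lerDl /=.
by apply: sumr_ge0 => i _; apply: f_ge0.
Qed.

Lemma sqr_sum_le (F : realFieldType) (I : finType) (f : I -> F) :
  (\sum_i f i) ^+ 2 <= #|I|%:R * \sum_i f i ^+ 2.
Proof. exact: (sqr_sum_le_card I). Qed.

(* Explicit ordinals: [inord] does not reduce under [vm_compute]. *)
Definition v0 : 'I_4 := @Ordinal 4 0 isT.
Definition v1 : 'I_4 := @Ordinal 4 1 isT.
Definition v2 : 'I_4 := @Ordinal 4 2 isT.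
Definition v3 : 'I_4 := @Ordinal 4 3 isT.

Lemma sum_ffun4 (V : nmodType) (T : finType) (Phi : T -> T -> T -> T -> V) :
  \sum_(t : {ffun 'I_4 -> T}) Phi (t v0) (t v1) (t v2) (t v3)
    = \sum_a \sum_b \sum_c \sum_d Phi a b c d.
Proof.
pose tuple4 (p : T * (T * (T * T))) :=
  [ffun i : 'I_4 => nth p.1 [:: p.1; p.2.1; p.2.2.1; p.2.2.2] i].
have tuple4_bij : bijective tuple4.
  exists (fun t : {ffun 'I_4 -> T} => (t v0, (t v1, (t v2, t v3)))) => [[a [b [c d]]] | t].
    by rewrite !ffunE.
  by apply/ffunP => -[[|[|[|[|i]]]] lt_i4] //=; rewrite ffunE; congr (t _); apply: val_inj.
rewrite (reindex tuple4) /=; last exact: onW_bij.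
symmetry; under eq_bigr do under eq_bigr do rewrite pair_bigA.
under eq_bigr do rewrite pair_bigA.
by rewrite pair_bigA; apply: eq_bigr => -[a [b [c d]]] _; rewrite !ffunE.
Qed.

(* [48 f] for the polynomial [f] above: averaging it over the 24 relabellings of
   a 4-vertex graph H gives [48 w_H] (see [classified_graph4]). *)
Definition flag48 (F : pzRingType) (y : 'I_4 -> 'I_4 -> F) : F :=
  15 + 12 * (y v0 v1 * y v0 v2) + 6 * (y v0 v1 * y v2 v3)
  + 12 * (y v0 v1 * y v1 v2 * y v2 v3) + 3 * (y v0 v1 * y v1 v2 * y v2 v3 * y v3 v0).

Lemma eq_flag48 (F : pzRingType) (y y' : 'I_4 -> 'I_4 -> F) : y =2 y' -> flag48 y = flag48 y'.
Proof. by move=> eq_y; rewrite /flag48 !eq_y. Qed.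

Lemma rmorph_flag48 (F1 F2 : pzRingType) (f : {rmorphism F1 -> F2}) y :
  f (flag48 y) = flag48 (fun i j => f (y i j)).
Proof. by rewrite /flag48 -!(rmorph_nat f) -!rmorphM -!rmorphD. Qed.

Lemma flag48_le (F : realDomainType) (y : 'I_4 -> 'I_4 -> F) :
  (forall i j, `|y i j| <= 1) -> flag48 y <= 48.
Proof.
move=> y_le1; have norm_mul_le1 (x z : F) : `|x| <= 1 -> `|z| <= 1 -> `|x * z| <= 1.
  by move=> x_le1 z_le1; rewrite normrM mulr_ile1.
have m1 := ler_normlW (norm_mul_le1 _ _ (y_le1 v0 v1) (y_le1 v0 v2)).
have m2 := ler_normlW (norm_mul_le1 _ _ (y_le1 v0 v1) (y_le1 v2 v3)).
have m3 := norm_mul_le1 _ _ (norm_mul_le1 _ _ (y_le1 v0 v1) (y_le1 v1 v2)) (y_le1 v2 v3).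
have m4 := ler_normlW (norm_mul_le1 _ _ m3 (y_le1 v3 v0)).
have := ler_normlW m3; rewrite /flag48; lra.
Qed.

Section SymmetricMatrix.

Variables (F : realFieldType) (T : finType) (M : T -> T -> F).
Hypothesis M_sym : forall a b, M a b = M b a.
Hypothesis M_le1 : forall a b, `|M a b| <= 1.

Let M2 b c := \sum_a M b a * M a c.

(* For symmetric [M] this is the trace of [M^4], the signed count of closed 4-walks. *)
Definition walk4 := \sum_b \sum_c (\sum_a M b a * M a c) ^+ 2.

Lemma sum_sqr_rowsum_in (V : {pred T}) :
  \sum_a (\sum_(b in V) M a b) ^+ 2 = \sum_(b in V) \sum_(c in V) M2 b c.
Proof.
transitivity (\sum_a \sum_(b in V) \sum_(c in V) M b a * M a c).
  by apply: eq_bigr => a _; rewrite expr2 big_distrlr; apply: eq_bigr => b _; rewrite M_sym.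
by rewrite exchange_big; apply: eq_bigr => b _; rewrite exchange_big.
Qed.

Lemma sqr_sum_M2_le (V : {pred T}) :
  (\sum_(b in V) \sum_(c in V) M2 b c) ^+ 2 <= #|V|%:R ^+ 2 * walk4.
Proof.
apply: le_trans (sqr_sum_le_card _ _) _.
rewrite [#|V|%:R ^+ 2]expr2 -mulrA; apply: ler_wpM2l; first exact: ler0n.
apply: le_trans (_ : _ <= #|V|%:R * \sum_(b in V) \sum_(c in V) M2 b c ^+ 2) _.
  by rewrite mulr_sumr; apply: ler_sum => b _; apply: sqr_sum_le_card.
apply: ler_wpM2l; first exact: ler0n.
have row_ge0 b : 0 <= \sum_(c in V) M2 b c ^+ 2 by apply: sumr_ge0 => c _; apply: sqr_ge0.
apply: le_trans (psumr_in_le _ row_ge0) _; apply: ler_sum => b _.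
exact: psumr_in_le (fun c => sqr_ge0 _).
Qed.

Lemma discrepancy_walk4 (U V : {pred T}) :
  (\sum_(a in U) \sum_(b in V) M a b) ^+ 4 <= #|U|%:R ^+ 2 * #|V|%:R ^+ 2 * walk4.
Proof.
set X := \sum_(a in U) _; set W := \sum_a (\sum_(b in V) M a b) ^+ 2.
have W_ge0 : 0 <= W by apply: sumr_ge0 => a _; apply: sqr_ge0.
have X2_le : X ^+ 2 <= #|U|%:R * W.
  apply: le_trans (sqr_sum_le_card _ _) _; apply: ler_wpM2l; first exact: ler0n.
  exact: psumr_in_le (fun a => sqr_ge0 _).
have W2_le : W ^+ 2 <= #|V|%:R ^+ 2 * walk4 by rewrite /W sum_sqr_rowsum_in sqr_sum_M2_le.
rewrite -mulrA -[4%N]/(2 * 2)%N exprM; apply: le_trans (_ : _ <= (#|U|%:R * W) ^+ 2) _.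
  by rewrite ler_sqr ?nnegrE ?sqr_ge0 // mulr_ge0 ?ler0n.
by rewrite exprMn ler_wpM2l ?sqr_ge0.
Qed.

Definition rowsum a := \sum_b M a b.

Lemma sum_flag_path2 :
  \sum_(t : {ffun 'I_4 -> T}) M (t v0) (t v1) * M (t v0) (t v2)
    = #|T|%:R * \sum_a rowsum a ^+ 2.
Proof.
rewrite (sum_ffun4 (fun a b c d => M a b * M a c)) mulr_sumr; apply: eq_bigr => a _.
rewrite expr2 /rowsum big_distrlr mulr_sumr; apply: eq_bigr => b _.
by rewrite mulr_sumr; apply: eq_bigr => c _; rewrite sumr_const mulr_natl.
Qed.

Lemma sum_flag_matching :
  \sum_(t : {ffun 'I_4 -> T}) M (t v0) (t v1) * M (t v2) (t v3) = (\sum_a rowsum a) ^+ 2.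
Proof.
rewrite (sum_ffun4 (fun a b c d => M a b * M c d)) expr2 mulr_suml; apply: eq_bigr => a _.
rewrite /rowsum mulr_suml; apply: eq_bigr => b _.
by rewrite mulr_sumr; apply: eq_bigr => c _; rewrite mulr_sumr.
Qed.

Lemma sum_flag_path3 :
  \sum_(t : {ffun 'I_4 -> T}) M (t v0) (t v1) * M (t v1) (t v2) * M (t v2) (t v3)
    = \sum_b \sum_c rowsum b * M b c * rowsum c.
Proof.
rewrite (sum_ffun4 (fun a b c d => M a b * M b c * M c d)) exchange_big.
apply: eq_bigr => b _; rewrite exchange_big; apply: eq_bigr => c _.
rewrite /rowsum !mulr_suml; apply: eq_bigr => a _.
by rewrite mulr_sumr; apply: eq_bigr => d _; rewrite (M_sym b a).
Qed.

Lemma sum_flag_cycle4 :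
  \sum_(t : {ffun 'I_4 -> T}) M (t v0) (t v1) * M (t v1) (t v2) * M (t v2) (t v3) * M (t v3) (t v0)
    = walk4.
Proof.
rewrite (sum_ffun4 (fun a b c d => M a b * M b c * M c d * M d a)); apply: eq_bigr => a _.
rewrite exchange_big; apply: eq_bigr => c _; rewrite expr2 mulr_suml.
apply: eq_bigr => b _; rewrite mulr_sumr; apply: eq_bigr => d _.
by rewrite (M_sym c d) (M_sym d a); ring.
Qed.

Lemma sum_flag_path3_ge :
  - (#|T|%:R * \sum_a rowsum a ^+ 2) <= \sum_b \sum_c rowsum b * M b c * rowsum c.
Proof.
apply: le_trans (_ : - (\sum_b `|rowsum b|) ^+ 2 <= _).
  rewrite lerN2; apply: le_trans (sqr_sum_le _) _.
  by rewrite ler_wpM2l ?ler0n // (eq_bigr _ (fun b _ => real_normK (num_real (rowsum b)))).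
rewrite expr2 mulr_suml -sumrN; apply: ler_sum => b _.
rewrite mulr_sumr -sumrN; apply: ler_sum => c _; apply: lerNnormlW.
by rewrite -mulrA mulrCA !normrM ler_piMl ?mulr_ge0.
Qed.

Lemma flag_sum_ge :
  15 * #|T|%:R ^+ 4 + 3 * walk4 <= \sum_(t : {ffun 'I_4 -> T}) flag48 (fun i j => M (t i) (t j)).
Proof.
rewrite /flag48 !big_split /= -!mulr_sumr sumr_const card_ffun card_ord -mulr_natr natrX.
rewrite sum_flag_path2 sum_flag_matching sum_flag_path3 sum_flag_cycle4.
have := sum_flag_path3_ge; have := sqr_ge0 (\sum_a rowsum a); lra.
Qed.

End SymmetricMatrix.

Definition sadj (F : pzRingType) (T : eqType) (e : rel T) (a b : T) : F :=
  if e a b then 1 else if a == b then 0 else -1.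
Arguments sadj {F T} e a b.

Section SignedAdjacency.

Variables (T : eqType) (e : rel T).

Lemma sadj_sym (F : pzRingType) : symmetric e -> forall a b, sadj e a b = sadj e b a :> F.
Proof. by move=> e_sym a b; rewrite /sadj e_sym eq_sym. Qed.

Lemma norm_sadj_le1 (F : numDomainType) a b : `|sadj e a b : F| <= 1.
Proof.
by rewrite /sadj; case: (e a b); case: (a == b); rewrite ?normrN ?normr1 ?normr0 ?ler01 ?lexx.
Qed.

Lemma rmorph_sadj (F1 F2 : pzRingType) (f : {rmorphism F1 -> F2}) a b :
  f (sadj e a b) = sadj e a b.
Proof. by rewrite /sadj; case: (e a b); case: (a == b); rewrite ?rmorphN ?rmorph1 ?rmorph0. Qed.

Lemma sadj_relpre (F : pzRingType) (T' : eqType) (f : T' -> T) a b :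
  injective f -> sadj e (f a) (f b) = sadj (relpre f e) a b :> F.
Proof. by move=> f_inj; rewrite /sadj /= (inj_eq f_inj). Qed.

Lemma sadj_neq (F : pzRingType) a b : a != b -> sadj e a b = 2 * (e a b)%:R - 1 :> F.
Proof.
by rewrite /sadj => /negPf->; case: (e a b); rewrite /= ?mulr0 ?sub0r // mulr1 mulr2n addrK.
Qed.

End SignedAdjacency.

Definition ords : seq 'I_4 := [:: v0; v1; v2; v3].
Definition perms4 : seq (seq 'I_4) := permutations ords.
Definition relabel (L : seq 'I_4) (i : 'I_4) : 'I_4 := nth v0 L i.

Lemma mem_ords i : i \in ords.
Proof. by case: i => [[|[|[|[|i]]]] lt_i4] //; rewrite !inE -?val_eqE. Qed.

Lemma size_perms4 : size perms4 = 24%N.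
Proof. by rewrite size_permutations. Qed.

Lemma relabel_inj L : L \in perms4 -> injective (relabel L).
Proof.
rewrite mem_permutations => L_perm i j /eqP.
rewrite /relabel nth_uniq ?(perm_uniq L_perm) ?(perm_size L_perm) //.
by move/eqP/val_inj.
Qed.

Lemma sum_relabel (V : nmodType) (T : finType) (f : {ffun 'I_4 -> T} -> V) :
  \sum_(t : {ffun 'I_4 -> T}) \sum_(L <- perms4) f [ffun i => t (relabel L i)]
    = (\sum_t f t) *+ 24.
Proof.
rewrite exchange_big /= (eq_big_seq (fun=> \sum_t f t)) => [|L L_perm].
  by rewrite (big_nth [::]) sumr_const_nat subn0 size_perms4.
pose relabel_inv := invF (relabel_inj L_perm).
symmetry; apply: reindex_inj.
apply: (can_inj (g := fun t : {ffun 'I_4 -> T} => [ffun i => t (relabel_inv i)])).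
by move=> t; apply/ffunP => i; rewrite !ffunE f_invF.
Qed.

Definition graph4 (b01 b02 b03 b12 b13 b23 : bool) : rel 'I_4 := fun i j =>
  match nat_of_ord i, nat_of_ord j with
  | 0, 1 | 1, 0 => b01 | 0, 2 | 2, 0 => b02 | 0, 3 | 3, 0 => b03
  | 1, 2 | 2, 1 => b12 | 1, 3 | 3, 1 => b13 | 2, 3 | 3, 2 => b23
  | _, _ => false
  end%N.

Lemma graph4_bits G : symmetric G -> irreflexive G ->
  G =2 graph4 (G v0 v1) (G v0 v2) (G v0 v3) (G v1 v2) (G v1 v3) (G v2 v3).
Proof.
move=> G_sym G_irr i j.
have := mem_ords i; rewrite !inE => /or4P[] /eqP->;
have := mem_ords j; rewrite !inE => /or4P[] /eqP->;
by rewrite /graph4 /= ?G_irr // G_sym.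
Qed.

Definition shapes : seq (rel 'I_4) :=
  [:: K4; compl_graph K4; D4; compl_graph D4; P3; compl_graph P3;
      C4; compl_graph C4; K13; compl_graph K13; P4].
Definition weights48 : seq nat := [:: 48; 24; 20; 20; 16; 8; 24; 16; 12; 12; 12]%N.

Lemma weights_nth k : (k < 11)%N ->
  nth (K4, 0) weights k = (nth K4 shapes k, (nth 0%N weights48 k)%:R / 48).
Proof. by do 11?[case: k => [|k]] => //= _; congr pair; field. Qed.

Definition isomorphic_by (L : seq 'I_4) (H G : rel 'I_4) : bool :=
  all (fun i => all (fun j => G (relabel L i) (relabel L j) == H i j) ords) ords.

(* A [foldr] rather than a [\sum], so that [vm_compute] can evaluate it. *)
Definition flag_sym (G : rel 'I_4) : int :=
  foldr +%R 0 [seq flag48 (fun i j => sadj G (relabel L i) (relabel L j)) | L <- perms4].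

Lemma flag_symE G :
  flag_sym G = \sum_(L <- perms4) flag48 (fun i j => sadj G (relabel L i) (relabel L j)).
Proof. by rewrite /flag_sym foldrE big_map. Qed.

Definition classified (G : rel 'I_4) : bool :=
  has (fun k => (flag_sym G == (24 * nth 0 weights48 k)%N%:Z)
                && has (fun L => isomorphic_by L (nth K4 shapes k) G) perms4)
      (iota 0 11).

Lemma classified_graph4 b01 b02 b03 b12 b13 b23 :
  classified (graph4 b01 b02 b03 b12 b13 b23).
Proof. by move: b01 b02 b03 b12 b13 b23; do 6 case; vm_compute. Qed.

Lemma eq_classified G G' : G =2 G' -> classified G = classified G'.
Proof.
move=> eq_G; rewrite /classified; have -> : flag_sym G = flag_sym G'.
  by rewrite !flag_symE; apply: eq_bigr => L _; apply: eq_flag48 => i j; rewrite /sadj eq_G.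
apply: eq_has => k; congr andb; apply: eq_has => L.
by apply: eq_all => i; apply: eq_all => j; rewrite /= !eq_G.
Qed.

Lemma classify4 G : symmetric G -> irreflexive G ->
  exists k : 'I_11, flag_sym G = (24 * nth 0 weights48 k)%N%:Z
    /\ exists2 L, L \in perms4 & forall i j, G (relabel L i) (relabel L j) = nth K4 shapes k i j.
Proof.
move=> G_sym G_irr.
have := classified_graph4 (G v0 v1) (G v0 v2) (G v0 v3) (G v1 v2) (G v1 v3) (G v2 v3).
rewrite -(eq_classified (graph4_bits G_sym G_irr)) => /hasP[k].
rewrite mem_iota => /andP[_ lt_k11] /andP[/eqP flagE /hasP[L L_perm iso_L]].
exists (Ordinal lt_k11); split => //; exists L => // i j; apply/eqP.
by move/allP: iso_L => /(_ i (mem_ords i))/allP/(_ j (mem_ords j)).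
Qed.

Lemma sum_injective_image (V : nmodType) (T : finType) (k : nat) (g : {set T} -> V) :
  \sum_(t : {ffun 'I_k -> T} | injectiveb t) g (t @: setT)
    = (\sum_(S : {set T} | #|S| == k) g S) *+ k`!.
Proof.
rewrite (partition_big (fun t : {ffun 'I_k -> T} => t @: setT) (fun S : {set T} => #|S| == k));
  last first.
  by move=> t /injectiveP t_inj; rewrite card_imset // cardsT card_ord.
rewrite -sumrMnl; apply: eq_bigr => S /eqP card_S.
rewrite (eq_bigr (fun=> g S)) => [|t /andP[_ /eqP ->] //].
rewrite (eq_bigl (fun t => t \in [set t : {ffun 'I_k -> T} in ffun_on S | injectiveb t])) => [|t].
  by rewrite sumr_const card_inj_ffuns_on card_S card_ord ffactnn.
rewrite !inE; case: (injectiveP t) => t_inj; rewrite ?andbF //= andbT.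
apply/eqP/ffun_onP => [<- i | t_S]; first exact: imset_f.
apply/eqP; rewrite eqEcard card_imset // cardsT card_ord card_S leqnn andbT.
by apply/subsetP => _ /imsetP[i _ ->]; apply: t_S.
Qed.

Lemma binom_mul_p_ind (T : finType) (e : rel T) (H : rel 'I_4) :
  'C(#|T|, 4)%:R * p_ind e H = #|[set S : {set T} | (#|S| == 4)%N && induced_copy e H S]|%:R.
Proof.
set N := #|_|; have N_le : (N <= 'C(#|T|, 4))%N.
  rewrite -card_draws; apply: subset_leq_card; apply/subsetP => S.
  by rewrite !inE => /andP[].
rewrite /p_ind -/N; have [C0 | C_gt0] := posnP 'C(#|T|, 4).
  by move: N_le; rewrite C0 leqn0 => /eqP->; rewrite !mul0r.
by rewrite mulrC divfK // pnatr_eq0 -lt0n.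
Qed.

Lemma ffact4_ge n : (n ^ 4 <= n ^_ 4 + 6 * n ^ 3)%N.
Proof. by case: n => [|[|[|n]]] //; rewrite !ffactnS ffactn0 /=; nia. Qed.

Section Counting.

Variables (T : finType) (e : rel T).
Hypotheses (e_sym : symmetric e) (e_irr : irreflexive e).

Definition wcount (S : {set T}) : R :=
  \sum_(k < 11) (nth 0%N weights48 k)%:R / 48 * (induced_copy e (nth K4 shapes k) S)%:R.

Let flagY (t : {ffun 'I_4 -> T}) : R := flag48 (fun i j => sadj e (t i) (t j)).

Lemma wcount_ge (k : 'I_11) S : induced_copy e (nth K4 shapes k) S ->
  (nth 0%N weights48 k)%:R / 48 <= wcount S.
Proof.
move=> copy_S; rewrite /wcount (bigD1 k) //= copy_S mulr1 lerDl.
by apply: sumr_ge0 => j _; rewrite !mulr_ge0 ?invr_ge0 ?ler0n.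
Qed.

Lemma weighted_densityE :
  weighted_density e = \sum_(k < 11) (nth 0%N weights48 k)%:R / 48 * p_ind e (nth K4 shapes k).
Proof.
rewrite /weighted_density (big_nth (K4, 0)) big_mkord.
by apply: eq_bigr => k _; rewrite weights_nth.
Qed.

Lemma sum_wcount :
  \sum_(S : {set T} | #|S| == 4%N) wcount S = 'C(#|T|, 4)%:R * weighted_density e.
Proof.
rewrite weighted_densityE mulr_sumr /wcount exchange_big /=; apply: eq_bigr => k _.
rewrite -mulr_sumr mulrCA binom_mul_p_ind; congr (_ * _).
rewrite -sum1_card natr_sum big_mkcond [RHS]big_mkcond /=; apply: eq_bigr => S _.
by rewrite inE; case: (#|S| == 4%N); case: induced_copy.
Qed.

Lemma relabel_sum_le_wcount (t : {ffun 'I_4 -> T}) : injective t ->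
  \sum_(L <- perms4) flagY [ffun i => t (relabel L i)] <= 1152 * wcount (t @: setT).
Proof.
move=> t_inj; set G := relpre t e.
have G_sym : symmetric G by move=> i j; rewrite /G /= e_sym.
have G_irr : irreflexive G by move=> i; rewrite /G /= e_irr.
have [k [flagE [L L_perm iso_L]]] := classify4 G_sym G_irr.
have -> : \sum_(L' <- perms4) flagY [ffun i => t (relabel L' i)] = (flag_sym G)%:~R.
  rewrite flag_symE rmorph_sum; apply: eq_bigr => L' _; rewrite rmorph_flag48.
  by apply: eq_flag48 => i j; rewrite !ffunE rmorph_sadj sadj_relpre.
pose t' := [ffun i => t (relabel L i)].
have t'_inj : injective t' by move=> i j; rewrite !ffunE => /t_inj/(relabel_inj L_perm).
have copy : induced_copy e (nth K4 shapes k) (t @: setT).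
  apply/existsP; exists t'; apply/and3P; split; first exact/injectiveP.
    rewrite eqEcard !card_imset // leqnn andbT.
    by apply/subsetP => _ /imsetP[i _ ->]; rewrite ffunE imset_f.
  by apply/forallP => i; apply/forallP => j; rewrite !ffunE; apply/eqP; apply: iso_L.
have := wcount_ge copy; rewrite flagE -pmulrn natrM; lra.
Qed.

Lemma sum_relabel_injective_le : in_Pi e ->
  \sum_(t : {ffun 'I_4 -> T} | injectiveb t) \sum_(L <- perms4) flagY [ffun i => t (relabel L i)]
    <= 360 * (#|T| ^_ 4)%:R.
Proof.
move=> Pi_e.
apply: le_trans (_ : _ <= \sum_(t : {ffun 'I_4 -> T} | injectiveb t) 1152 * wcount (t @: setT)) _.
  by apply: ler_sum => t /injectiveP; apply: relabel_sum_le_wcount.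
rewrite -mulr_sumr sum_injective_image sum_wcount -bin_ffact natrM -[_ *+ _]mulr_natr.
have C_ge0 : 0 <= 'C(#|T|, 4)%:R :> R by apply: ler0n.
rewrite /in_Pi in Pi_e; rewrite (_ : 4`! = 24%N) //; nra.
Qed.

Lemma sum_relabel_noninjective_le :
  \sum_(t : {ffun 'I_4 -> T} | ~~ injectiveb t)
     \sum_(L <- perms4) flagY [ffun i => t (relabel L i)]
    <= 1152 * (#|T|%:R ^+ 4 - (#|T| ^_ 4)%:R).
Proof.
apply: le_trans (_ : _ <= \sum_(t : {ffun 'I_4 -> T} | ~~ injectiveb t) 1152) _.
  apply: ler_sum => t _; apply: le_trans (_ : _ <= \sum_(L <- perms4) 48) _.
    by apply: ler_sum => L _; apply: flag48_le => i j; apply: norm_sadj_le1.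
  by rewrite (big_nth [::]) sumr_const_nat subn0 size_perms4 -[48 *+ 24]mulr_natr; lra.
set A := [set t : {ffun 'I_4 -> T} | injectiveb t].
rewrite (eq_bigl (fun t => t \in ~: A)) => [|t]; last by rewrite !inE.
have := cardsC A; rewrite card_inj_ffuns card_ffun !card_ord => /(congr1 (GRing.natmul (1 : R))).
rewrite natrD natrX sumr_const -mulr_natr; lra.
Qed.

Lemma flag_sum_le : in_Pi e ->
  \sum_(t : {ffun 'I_4 -> T}) flagY t <= 48 * #|T|%:R ^+ 4 - 33 * (#|T| ^_ 4)%:R.
Proof.
move=> Pi_e; have := sum_relabel flagY.
rewrite (bigID (fun t : {ffun 'I_4 -> T} => injectiveb t)) /= -mulr_natr.
have := sum_relabel_injective_le Pi_e; have := sum_relabel_noninjective_le; lra.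
Qed.

Lemma walk4_le : in_Pi e -> walk4 (@sadj R _ e) <= 66 * #|T|%:R ^+ 3.
Proof.
move=> Pi_e.
have := flag_sum_ge (sadj_sym R e_sym) (norm_sadj_le1 e R).
have := flag_sum_le Pi_e; rewrite /flagY.
have := ffact4_ge #|T|; rewrite -(ler_nat R) natrD natrM !natrX.
lra.
Qed.

End Counting.

Lemma sum_sadj_between (F : pzRingType) (T : finType) (e : rel T) (U V : {set T}) :
  [disjoint U & V] ->
  \sum_(a in U) \sum_(b in V) (sadj e a b : F) = 2 * (e_between e U V)%:R - (#|U| * #|V|)%:R.
Proof.
move=> UV_dis.
have -> : (e_between e U V)%:R = \sum_(a in U) \sum_(b in V) (e a b)%:R :> F.
  rewrite pair_big /e_between -sum1_card natr_sum big_mkcond [RHS]big_mkcond /=.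
  by apply: eq_bigr => -[a b] _; rewrite !inE /=; case: (a \in U); case: (b \in V); case: (e a b).
rewrite (eq_bigr (fun a => 2 * \sum_(b in V) (e a b)%:R - #|V|%:R)) => [|a aU].
  by rewrite sumrB -mulr_sumr sumr_const natrM [#|U|%:R * _]mulr_natl.
rewrite mulr_sumr -[#|V|%:R]sumr_const -sumrB; apply: eq_bigr => b bV.
by rewrite sadj_neq //; apply: contraTneq bV => <-; rewrite (disjointFr UV_dis aU).
Qed.

Lemma norm_le_of_pow4 (F : realFieldType) (X u v n d K Q : F) :
  0 < d -> 0 <= n -> d * n <= u -> d * n <= v ->
  X ^+ 4 <= u ^+ 2 * v ^+ 2 * Q -> Q <= K * n ^+ 3 -> K <= 16 * d ^+ 8 * n ->
  `|X| <= 2 * d * (u * v).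
Proof.
move=> /ltW d_ge0 n_ge0 u_ge v_ge X4_le Q_le K_le.
have dn_ge0 : 0 <= d * n := mulr_ge0 d_ge0 n_ge0.
have [u_ge0 v_ge0] := (le_trans dn_ge0 u_ge, le_trans dn_ge0 v_ge).
have uv_ge : (d * n) ^+ 4 <= u ^+ 2 * v ^+ 2.
  by rewrite -[4%N]/(2 + 2)%N exprD ler_pM ?sqr_ge0 // ler_sqr ?nnegrE.
have Q_le' : Q <= 16 * d ^+ 4 * (u ^+ 2 * v ^+ 2).
  apply: (le_trans Q_le); apply: le_trans (_ : _ <= 16 * d ^+ 4 * (d * n) ^+ 4) _.
    have -> : 16 * d ^+ 4 * (d * n) ^+ 4 = 16 * d ^+ 8 * n * n ^+ 3 by ring.
    by rewrite ler_wpM2r ?exprn_ge0.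
  by rewrite ler_wpM2l ?mulr_ge0 ?exprn_ge0.
rewrite -(ler_pXn2r (_ : 0 < 4)%N) ?nnegrE ?mulr_ge0 //.
rewrite -normrX ger0_norm ?exprn_even_ge0 //; apply: (le_trans X4_le).
have -> : (2 * d * (u * v)) ^+ 4 = u ^+ 2 * v ^+ 2 * (16 * d ^+ 4 * (u ^+ 2 * v ^+ 2)) by ring.
by rewrite ler_wpM2l ?mulr_ge0 ?sqr_ge0.
Qed.

Lemma quasirandom_of_walk4 (T : finType) (e : rel T) (d K : R) : symmetric e -> 0 < d ->
  walk4 (@sadj R _ e) <= K * #|T|%:R ^+ 3 -> K <= 16 * d ^+ 8 * #|T|%:R -> quasirandom e d.
Proof.
move=> e_sym d_gt0 walk_le K_le U V UV_dis U_ge V_ge.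
have disc := discrepancy_walk4 (sadj_sym R e_sym) U V.
have := norm_le_of_pow4 d_gt0 (ler0n _ _) U_ge V_ge disc walk_le K_le.
rewrite sum_sadj_between // natrM => /ler_normlP[]; rewrite opprB => lower upper.
by apply/andP; split; lra.
Qed.

Lemma Rpower_pow_mul_ge1 (x a : R) (k : nat) : 1 <= x -> k%:R * a <= 1 ->
  1 <= Rpower x (- a) ^+ k * x.
Proof.
move=> x_ge1 ka_le1; have x_gt0 : Rlt 0 x by apply/RltP; apply: lt_le_trans x_ge1.
have -> : Rpower x (- a) ^+ k * x = Rpower x (- a * INR k + 1).
  rewrite -RpowE -Rpower_pow; last exact: exp_pos.
  by rewrite Rpower_mult Rpower_plus (Rpower_1 x x_gt0).
apply: le_trans (_ : Rpower x 0 <= _); first by rewrite (Rpower_O x x_gt0) R1E.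
apply/RleP/Rle_Rpower; apply/RleP.
  by rewrite R1E.
by rewrite R0E R1E RplusE RmultE RoppE INRE mulNr mulrC; lra.
Qed.

Theorem lemma2p4 :
  exists C : R, 0 < C /\
    forall (n : nat) (e : rel 'I_n), (1 <= n)%N ->
      simple_graph e -> in_Pi e ->
      quasirandom e (C * Rpower n%:R (- (1 / 24))).
Proof.
exists 2%:R; split=> [|n e n_ge1 [e_sym e_irr] Pi_e]; first exact: ltr0Sn.
set r := Rpower n%:R _; have r_gt0 : 0 < r by apply/RltP/exp_pos.
have r8_ge1 : 1 <= r ^+ 8 * n%:R.
  apply: Rpower_pow_mul_ge1; first by rewrite ler1n.
  by rewrite RdivE R1E IZRposE INRE /=; lra.
apply: (quasirandom_of_walk4 (K := 66%:R) e_sym).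
- by rewrite mulr_gt0.
- exact: walk4_le.
rewrite card_ord (_ : 16 * (2%:R * r) ^+ 8 * n%:R = 4096 * (r ^+ 8 * n%:R)); first lra.
by ring.
Qed.
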